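(* Consider the algorithm described in the context, suppose it does not terminate finitely, and suppose there is $\sigma_{\min}>0$ with $\sigma_{\min}(J_k)\ge\sigma_{\min}$ for all $k\in\mathbb{N}$. Then for all $k\in\mathbb{N}$, $\tau_{k,\mathrm{trial}}\ge\tau_{\min,\mathrm{trial}}$, where, with $K:=2\kappa_v\kappa_{\nabla c}\big(\kappa_{\nabla f}+\kappa_{\partial r}+\bar\sigma_u\kappa_c\kappa_v\kappa_{\nabla c}\big)$, $$\tau_{\min,\mathrm{trial}}:=\min\Big\{\frac{(1-\sigma_c)\kappa_v\sigma_{\min}^2}{K},\ \frac{(1-\sigma_c)(\sigma_{\min}/\kappa_{\nabla c})^2}{K\alpha_0}\Big\},$$ and consequently $\tau_k\ge\tau_{\min}:=\min\{\tau_0,(1-\epsilon_\tau)\tau_{\min,\mathrm{trial}}\}$ for all $k\in\mathbb{N}$.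
   Context: Problem: $\min_{x\in\mathbb{R}^n} f(x)+r(x)$ subject to $c(x)=0$, where $f:\mathbb{R}^n\to\mathbb{R}$ and $c:\mathbb{R}^n\to\mathbb{R}^m$ ($m\le n$) are continuously differentiable and $r:\mathbb{R}^n\to\mathbb{R}_{\ge 0}$ is convex. Write $g(x)=\nabla f(x)$, $J(x)=\nabla c(x)^T$, and $f_k=f(x_k)$, $g_k=g(x_k)$, $c_k=c(x_k)$, $J_k=J(x_k)$, $r_k=r(x_k)$. All norms are Euclidean (spectral norm for matrices). Merit function: $\Phi_\tau(x)=\tau(f(x)+r(x))+\|c(x)\|_2$. Algorithm: inputs $x_0$, $\alpha_0>0$, $\tau_{-1}>0$; constants $\kappa_v>0$, $\sigma_c,\epsilon_\tau,\xi,\eta\in(0,1)$, $\sigma_u\in(0,1/2]$, $\bar\sigma_u:=\sigma_u+\tfrac12$. For $k=0,1,\dots$: 1. If $J_k^Tc_k\ne0$, compute $v_k$ with $v_k\in\mathrm{Range}(J_k^T)$, $\|v_k\|_2\le\kappa_v\alpha_k\|J_k^Tc_k\|_2$, $\|c_k+J_kv_k\|_2\le\|c_k+J_kv_k^c\|_2$, where $v_k^c=-\beta_k^cJ_k^Tc_k$ with $\beta_k^c$ minimizing $\tfrac12\|c_k-\beta J_kJ_k^Tc_k\|_2^2$ over $0\le\beta\le\kappa_v\alpha_k$. Otherwise set $v_k=0$, and if $c_k\ne0$ terminate. 2. Let $u_k$ be the unique minimizer of $g_k^Tu+\tfrac1{2\alpha_k}\|u\|_2^2+r(x_k+v_k+u)$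 subject to $J_ku=0$; set $s_k=v_k+u_k$. If $s_k=0$, terminate. 3. Let $D_k:=g_k^Ts_k+\bar\sigma_u\|s_k\|_2^2/\alpha_k+r(x_k+s_k)-r_k$; $\tau_{k,\mathrm{trial}}=\infty$ if $D_k\le0$, else $\tau_{k,\mathrm{trial}}=(1-\sigma_c)(\|c_k\|_2-\|c_k+J_kv_k\|_2)/D_k$. Set $\tau_k=\tau_{k-1}$ if $\tau_{k-1}\le\tau_{k,\mathrm{trial}}$, else $\tau_k=\min\{(1-\epsilon_\tau)\tau_{k-1},\tau_{k,\mathrm{trial}}\}$. 4. With $\Delta q_k(s,\tau):=-\tau(g_k^Ts+\tfrac1{2\alpha_k}\|s\|_2^2+r(x_k+s)-r_k)+\|c_k\|_2-\|c_k+J_ks\|_2$: if $\Phi_{\tau_k}(x_k+s_k)\le\Phi_{\tau_k}(x_k)-\eta\Delta q_k(s_k,\tau_k)$ set $x_{k+1}=x_k+s_k$, $\alpha_{k+1}=\alpha_k$; else $x_{k+1}=x_k$, $\alpha_{k+1}=\xi\alpha_k$. Standing assumption: there is an open convex set $\mathcal X$ containing all iterates $x_k$ and trial points $x_k+s_k$, and positive constants such that for all $x\in\mathcal X$: $f$ is bounded below, $\|\nabla f(x)\|_2\le\kappa_{\nabla f}$, $\|c(x)\|_2\le\kappa_c$, $\|J(x)\|_2\le\kappa_{\nabla c}$, every $w\in\partial r(x)$ has $\|w\|_2\le\kappa_{\partial r}$; and $\nabla f$, $J$ are Lipschitz continuous on $\mathcal X$. *)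

From HB Require Import structures.
From mathcomp Require Import all_boot all_order all_algebra.
From mathcomp Require Import all_classical all_reals all_analysis.
Set Implicit Arguments. Unset Strict Implicit. Unset Printing Implicit Defensive.
Import Order.TTheory GRing.Theory Num.Theory.
Import numFieldNormedType.Exports.
Local Open Scope classical_set_scope.
Local Open Scope ring_scope.

Section Defs.
Context {R : realType}.

Definition dotv {n : nat} (u v : 'cV[R]_n) : R := \sum_i u i 0 * v i 0.
Definition enorm {n : nat} (v : 'cV[R]_n) : R := Num.sqrt (dotv v v).

Definition specnorm {m n : nat} (A : 'M[R]_(m, n)) : R :=
  sup [set enorm (A *m v) | v in [set v : 'cV[R]_n | enorm v <= 1]].

(* smallest singular value of A : 'M_(m,n) with m <= n, via its variational
   characterization min_{||y||_2 = 1} ||A^T y||_2 *)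
Definition sigma_min {m n : nat} (A : 'M[R]_(m, n)) : R :=
  inf [set enorm (A^T *m y) | y in [set y : 'cV[R]_m | enorm y = 1]].

Definition alg_convex_set {n : nat} (X : set 'cV[R]_n) : Prop :=
  forall x y t, X x -> X y -> 0 <= t <= 1 -> X ((1 - t) *: x + t *: y).
Definition alg_convex_fun {n : nat} (r : 'cV[R]_n -> R) : Prop :=
  forall x y t, 0 <= t <= 1 ->
    r ((1 - t) *: x + t *: y) <= (1 - t) * r x + t * r y.

Definition subgrad {n : nat} (r : 'cV[R]_n -> R) (x w : 'cV[R]_n) : Prop :=
  forall y, r x + dotv w (y - x) <= r y.

Definition alg_lipschitz_on {n p q : nat} (X : set 'cV[R]_n)
    (F : 'cV[R]_n -> 'M[R]_(p, q)) (norm : 'M[R]_(p, q) -> R) : Prop :=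
  exists L : R, forall x y, X x -> X y -> norm (F x - F y) <= L * enorm (x - y).

Definition merit {n m : nat} (f r : 'cV[R]_n -> R) (c : 'cV[R]_n -> 'cV[R]_m)
  (tau : R) (x : 'cV[R]_n) : R := tau * (f x + r x) + enorm (c x).

Definition Delta_q {n m : nat} (r : 'cV[R]_n -> R) (alpha : R)
  (xk gk : 'cV[R]_n) (ck : 'cV[R]_m) (Jk : 'M[R]_(m, n)) (s : 'cV[R]_n) (tau : R) : R :=
  - tau * (dotv gk s + (2 * alpha)^-1 * enorm s ^+ 2 + r (xk + s) - r xk)
  + enorm ck - enorm (ck + Jk *m s).

Definition D_k {n m : nat} (r : 'cV[R]_n -> R) (sigma_u_bar alpha : R)
  (xk gk sk : 'cV[R]_n) : R :=
  dotv gk sk + sigma_u_bar * enorm sk ^+ 2 / alpha + r (xk + sk) - r xk.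

Definition tau_trial_of {n m : nat} (r : 'cV[R]_n -> R) (sigma_c sigma_u_bar alpha : R)
  (xk gk vk sk : 'cV[R]_n) (ck : 'cV[R]_m) (Jk : 'M[R]_(m, n)) : \bar R :=
  let D := @D_k n m r sigma_u_bar alpha xk gk sk in
  if D <= 0 then +oo%E
  else ((1 - sigma_c) * (enorm ck - enorm (ck + Jk *m vk)) / D)%:E.

Definition tau_update (eps_tau tau_prev : R) (ttrial : \bar R) : R :=
  if (tau_prev%:E <= ttrial)%E then tau_prev
  else Num.min ((1 - eps_tau) * tau_prev) (fine ttrial).

(* A non-terminating run of the algorithm: sequences x, alpha, tau, v, u
   (with s_k = v_k + u_k) satisfying steps 1-4 for every k, with no
   termination ever triggered. *)
Definition algorithm_run {n m : nat}
  (f r : 'cV[R]_n -> R) (g : 'cV[R]_n -> 'cV[R]_n)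
  (c : 'cV[R]_n -> 'cV[R]_m) (J : 'cV[R]_n -> 'M[R]_(m, n))
  (kappa_v sigma_c eps_tau xi eta sigma_u tau_m1 : R)
  (x : nat -> 'cV[R]_n) (alpha tau : nat -> R) (v u : nat -> 'cV[R]_n) : Prop :=
  let sigma_u_bar := sigma_u + 2^-1 in
  forall k : nat,
  let xk := x k in let gk := g xk in let ck := c xk in let Jk := J xk in
  let sk := v k + u k in
  let tau_prev := if k is k'.+1 then tau k' else tau_m1 in
  (Jk^T *m ck != 0 ->
     (exists y : 'cV[R]_m, v k = Jk^T *m y) /\
     enorm (v k) <= kappa_v * alpha k * enorm (Jk^T *m ck) /\
     (exists beta_c : R,
        0 <= beta_c <= kappa_v * alpha k /\
        (forall beta, 0 <= beta <= kappa_v * alpha k ->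
           2^-1 * enorm (ck - beta *: (Jk *m Jk^T *m ck)) ^+ 2
           >= 2^-1 * enorm (ck - beta_c *: (Jk *m Jk^T *m ck)) ^+ 2) /\
        enorm (ck + Jk *m v k) <= enorm (ck + Jk *m (- beta_c *: (Jk^T *m ck))))) /\
  (Jk^T *m ck = 0 -> v k = 0 /\ ck = 0 (* otherwise the algorithm terminates *)) /\
  (Jk *m u k = 0 /\
   forall w : 'cV[R]_n, Jk *m w = 0 ->
     dotv gk (u k) + (2 * alpha k)^-1 * enorm (u k) ^+ 2 + r (xk + v k + u k)
     <= dotv gk w + (2 * alpha k)^-1 * enorm w ^+ 2 + r (xk + v k + w)) /\
  sk != 0 (* no termination at step 2 *) /\
  tau k = tau_update eps_tau tau_prev
            (@tau_trial_of n m r sigma_c sigma_u_bar (alpha k) xk gk (v k) sk ck Jk) /\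
  (if merit f r c (tau k) (xk + sk)
        <= merit f r c (tau k) xk - eta * Delta_q r (alpha k) xk gk ck Jk sk (tau k)
   then x k.+1 = xk + sk /\ alpha k.+1 = alpha k
   else x k.+1 = xk /\ alpha k.+1 = xi * alpha k).

End Defs.

(* When [J_k^T c_k = 0] the normal step vanishes, and the tangential step alone
   makes [D_k <= 0], so [tau_k,trial = +oo].  Otherwise two estimates meet.
   Comparing the prox step [u_k] with its shortening [(1 - t) u_k] and using a
   subgradient of [r] near [x_k + s_k] gives
     [D_k <= (kappa_gf + kappa_dr) |v_k| + sigma_u_bar |v_k|^2 / alpha_k
          <= alpha_k K |J_k^T c_k| / (2 kappa_gc)],
   while the Cauchy step of length [b = min (kappa_v alpha_k) kappa_gc^-2]
   along [- J_k J_k^T c_k] reduces the linearized infeasibility by at least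
   [b |J_k^T c_k|^2 / (2 |c_k|)], with [|J_k^T c_k| >= sigma_min |c_k|].
   The ratio is then bounded below uniformly because [alpha_k <= alpha_0], and
   the bound on [tau_k] follows by induction from the update rule.  Subgradients
   of the finite convex function [r] exist by a coordinatewise Hahn-Banach
   argument. *)

From HB Require Import structures.
From mathcomp Require Import all_boot all_order all_algebra.
From mathcomp Require Import all_classical all_reals all_analysis.
From mathcomp Require Import ring lra.
Import Order.TTheory GRing.Theory Num.Theory.
Import numFieldNormedType.Exports.
Local Open Scope classical_set_scope.
Local Open Scope ring_scope.

(** * Euclidean geometry of column vectors *)

Section Euclid.
Context {R : realType} {n : nat}.
Implicit Types (u v w : 'cV[R]_n) (a : R).

Lemma dotvC u v : dotv u v = dotv v u.
Proof. by apply: eq_bigr => i _; rewrite mulrC. Qed.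

Lemma dotvDl u v w : dotv (u + v) w = dotv u w + dotv v w.
Proof. by rewrite /dotv -big_split; apply: eq_bigr => i _; rewrite !mxE mulrDl. Qed.

Lemma dotvDr u v w : dotv w (u + v) = dotv w u + dotv w v.
Proof. by rewrite dotvC dotvDl !(dotvC w). Qed.

Lemma dotvZl a u w : dotv (a *: u) w = a * dotv u w.
Proof. by rewrite /dotv mulr_sumr; apply: eq_bigr => i _; rewrite !mxE mulrA. Qed.

Lemma dotvZr a u w : dotv w (a *: u) = a * dotv w u.
Proof. by rewrite dotvC dotvZl dotvC. Qed.

Lemma dotvNl u w : dotv (- u) w = - dotv u w.
Proof. by rewrite -scaleN1r dotvZl mulN1r. Qed.

Lemma dotvNr u w : dotv w (- u) = - dotv w u.
Proof. by rewrite dotvC dotvNl dotvC. Qed.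

Lemma dotvBl u v w : dotv (u - v) w = dotv u w - dotv v w.
Proof. by rewrite dotvDl dotvNl. Qed.

Lemma dotvBr u v w : dotv w (u - v) = dotv w u - dotv w v.
Proof. by rewrite dotvC dotvBl !(dotvC w). Qed.

Lemma dotv0l w : dotv 0 w = 0.
Proof. by rewrite /dotv big1 // => i _; rewrite mxE mul0r. Qed.

Lemma dotv0r w : dotv w 0 = 0.
Proof. by rewrite dotvC dotv0l. Qed.

Lemma dotvv_ge0 u : 0 <= dotv u u.
Proof. by apply: sumr_ge0 => i _; rewrite -expr2 sqr_ge0. Qed.

Lemma dotvv_eq0 u : dotv u u = 0 -> u = 0.
Proof.
move=> /eqP; rewrite psumr_eq0; last by move=> i _; rewrite -expr2 sqr_ge0.
move=> /allP u0; apply/matrixP => i j; rewrite (ord1 j) mxE.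
by have := u0 i (mem_index_enum i); rewrite implyTb mulf_eq0 orbb => /eqP.
Qed.

Lemma enorm_ge0 u : 0 <= enorm u.
Proof. exact: sqrtr_ge0. Qed.

Lemma enorm_sqr u : enorm u ^+ 2 = dotv u u.
Proof. by rewrite sqr_sqrtr // dotvv_ge0. Qed.

Lemma enorm_eq0 u : enorm u = 0 -> u = 0.
Proof. by move=> u0; apply: dotvv_eq0; rewrite -enorm_sqr u0 expr0n. Qed.

Lemma enorm0 : enorm (0 : 'cV[R]_n) = 0.
Proof. by rewrite /enorm dotv0l sqrtr0. Qed.

Lemma enorm_gt0 u : (0 < enorm u) = (u != 0).
Proof.
rewrite lt_def enorm_ge0 andbT; congr negb.
by apply/idP/idP => [/eqP/enorm_eq0->|/eqP->] //; rewrite enorm0.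
Qed.

Lemma enormZ a u : enorm (a *: u) = `|a| * enorm u.
Proof.
by rewrite /enorm dotvZl dotvZr mulrA -expr2 sqrtrM ?sqr_ge0 // sqrtr_sqr.
Qed.

Lemma enormN u : enorm (- u) = enorm u.
Proof. by rewrite -scaleN1r enormZ normrN1 mul1r. Qed.

Lemma enorm_normalize u : u != 0 -> enorm ((enorm u)^-1 *: u) = 1.
Proof.
rewrite -enorm_gt0 => u0.
by rewrite enormZ ger0_norm ?invr_ge0 ?enorm_ge0 // mulVf ?gt_eqF.
Qed.

Lemma cauchy_schwarz u v : dotv u v <= enorm u * enorm v.
Proof.
have [->|u0] := eqVneq u 0; first by rewrite dotv0l enorm0 mul0r.
have [->|v0] := eqVneq v 0; first by rewrite dotv0r enorm0 mulr0.
set a := enorm v; set b := enorm u.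
have ab0 : 0 < b * a by rewrite mulr_gt0 ?enorm_gt0.
have := dotvv_ge0 (a *: u - b *: v).
rewrite !(dotvBl, dotvBr, dotvZl, dotvZr) -!enorm_sqr -/a -/b (dotvC v u) => sq_ge0.
by rewrite -(ler_pM2l ab0); nra.
Qed.

Lemma normr_dotv_le u v : `|dotv u v| <= enorm u * enorm v.
Proof.
case: (lerP 0 (dotv u v)) => uv0; first by rewrite ger0_norm // cauchy_schwarz.
by rewrite ltr0_norm // -dotvNl -(enormN u) cauchy_schwarz.
Qed.

Lemma dotv_delta (i : 'I_n) w : dotv (delta_mx i 0) w = w i 0.
Proof.
rewrite /dotv (bigD1 i) //= big1 => [|j /negbTE ji]; last by rewrite mxE ji mul0r.
by rewrite mxE !eqxx mul1r addr0.
Qed.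

End Euclid.

Lemma dotv_trmx {R : realType} {m n} (A : 'M[R]_(m, n)) y u :
  dotv (A^T *m y) u = dotv y (A *m u).
Proof.
rewrite /dotv; under eq_bigr => i _ do rewrite mxE mulr_suml.
rewrite exchange_big /=; apply: eq_bigr => j _.
by rewrite mxE mulr_sumr; apply: eq_bigr => i _; rewrite !mxE mulrCA mulrA.
Qed.

(** * Subgradients of finite convex functions *)

Definition supp_below {R : realType} {n} (k : nat) (d : 'cV[R]_n) :=
  forall i : 'I_n, (k <= i)%N -> d i 0 = 0.

Section ConvexMinorant.
Context {R : realType} {n : nat} {phi : 'cV[R]_n -> R}.
Hypotheses (phi_convex : alg_convex_fun phi) (phi0 : phi 0 = 0).

(* Convexity on the segment between [d' - s e] and [d + t e], whose
   [s/(s+t)]-point [(t d' + s d)/(s+t)] lies back in the subspace. *)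
Lemma convex_two_sided_slopes {k w} e {d d' s t} :
  (forall d, supp_below k d -> dotv w d <= phi d) ->
  supp_below k d -> supp_below k d' -> 0 < s -> 0 < t ->
  t * dotv w d' + s * dotv w d <= t * phi (d' - s *: e) + s * phi (d + t *: e).
Proof.
move=> w_min d_supp d'_supp s0 t0.
have st0 : 0 < s + t by rewrite addr_gt0.
set l := s / (s + t).
have l01 : 0 <= l <= 1.
  by rewrite /l divr_ge0 ?(ltW s0) ?(ltW st0) //= ler_pdivrMr // mul1r lerDl ltW.
have lt : l * t = (1 - l) * s by rewrite /l; field; rewrite gt_eqF.
have mid : (1 - l) *: (d' - s *: e) + l *: (d + t *: e) = (1 - l) *: d' + l *: d.
  apply/matrixP => i j; rewrite !mxE.
  transitivity ((1 - l) * d' i j + l * d i j + (l * t - (1 - l) * s) * e i j).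
    by ring.
  by rewrite lt subrr mul0r addr0.
have mid_supp : supp_below k ((1 - l) *: d' + l *: d).
  by move=> i ki; rewrite !mxE d_supp // d'_supp // !mulr0 addr0.
have := phi_convex (d' - s *: e) (d + t *: e) l l01.
rewrite mid => /(le_trans (w_min _ mid_supp)); rewrite dotvDr !dotvZr.
have scale A B : t * A + s * B = (s + t) * ((1 - l) * A + l * B).
  by rewrite /l; field; rewrite gt_eqF.
by rewrite !scale ler_pM2l.
Qed.

(* The one-dimensional Hahn-Banach step: the new coordinate of the minorant is
   any number between the left and right slopes of [phi] along [e]. *)
Lemma convex_minorant_extend k (kn : (k < n)%N) w :
  (forall d, supp_below k d -> dotv w d <= phi d) ->
  exists w', forall d, supp_below k.+1 d -> dotv w' d <= phi d.
Proof.
move=> w_min; set ik := Ordinal kn; set e : 'cV[R]_n := delta_mx ik 0.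
have supp0 : supp_below k (0 : 'cV[R]_n) by move=> i _; rewrite mxE.
pose L := [set (dotv w d' - phi (d' - s *: e)) / s | d' in supp_below k
                                                    & s in [set s | 0 < s]].
have L_ub d t : supp_below k d -> 0 < t -> ubound L ((phi (d + t *: e) - dotv w d) / t).
  move=> d_supp t0 _ [d' d'_supp [s /= s0 <-]].
  rewrite ler_pdivrMr // mulrAC ler_pdivlMr //.
  have := convex_two_sided_slopes e w_min d_supp d'_supp s0 t0; lra.
have L_sup : has_sup L.
  split; first by exists ((dotv w 0 - phi (0 - 1 *: e)) / 1), 0 => //; exists 1 => /=.
  by exists ((phi (0 + 1 *: e) - dotv w 0) / 1); apply: L_ub.
set a := sup L.
exists (w + (a - w ik 0) *: e) => d d_supp.
set t := d ik 0; set d0 := d - t *: e.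
have d0_supp : supp_below k d0.
  move=> i ki; rewrite !mxE.
  have [->|i_ne] := eqVneq i ik; first by rewrite eqxx mulr1 subrr.
  rewrite d_supp ?mulr0 ?subrr // ltn_neqAle ki andbT.
  by apply: contra i_ne => /eqP ki'; apply/eqP/val_inj.
have -> : dotv (w + (a - w ik 0) *: e) d = dotv w d0 + t * a.
  rewrite dotvDl dotvZl dotv_delta /d0 dotvBr dotvZr (dotvC w e) dotv_delta -/t.
  by ring.
have d_split : d = d0 + t *: e by rewrite /d0 subrK.
case: (ltgtP 0 t) => [t0|t0|t0].
- have := ge_sup L_sup.1 (L_ub _ _ d0_supp t0).
  by rewrite -/a -d_split ler_pdivlMr // => ?; lra.
- have s0 : 0 < - t by rewrite oppr_gt0.
  have : (dotv w d0 - phi (d0 - (- t) *: e)) / (- t) <= a.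
    by apply: sup_upper_bound => //; exists d0 => //; exists (- t).
  by rewrite scaleNr opprK -d_split ler_pdivrMr // => ?; lra.
- have d0E : d0 = d by rewrite /d0 -t0 scale0r subr0.
  by rewrite -t0 mul0r addr0 -d0E w_min.
Qed.

Lemma convex_linear_minorant k : (k <= n)%N ->
  exists w, forall d, supp_below k d -> dotv w d <= phi d.
Proof.
elim: k => [_|k IHk kn].
  exists 0 => d d_supp; have -> : d = 0.
    by apply/matrixP => i j; rewrite (ord1 j) mxE; apply: d_supp.
  by rewrite dotv0l phi0.
by have [w w_min] := IHk (ltnW kn); apply: convex_minorant_extend w_min.
Qed.

End ConvexMinorant.

Lemma subgrad_exists {R : realType} {n} {r : 'cV[R]_n -> R} :
  alg_convex_fun r -> forall y, exists w, subgrad r y w.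
Proof.
move=> r_convex y; pose phi d := r (y + d) - r y.
have phi_convex : alg_convex_fun phi.
  move=> a b l l01; rewrite /phi.
  have -> : y + ((1 - l) *: a + l *: b) = (1 - l) *: (y + a) + l *: (y + b).
    by rewrite !scalerDr addrACA -scalerDl subrK scale1r.
  have := r_convex (y + a) (y + b) l l01; lra.
have phi0 : phi 0 = 0 by rewrite /phi addr0 subrr.
have [w w_min] := convex_linear_minorant phi_convex phi0 n (leqnn n).
exists w => z.
have supp_all : supp_below n (z - y) by move=> i; rewrite leqNgt ltn_ord.
by have := w_min _ supp_all; rewrite /phi (addrC y) subrK; lra.
Qed.

(** * Spectral norm and smallest singular value *)

Section MatrixNorms.
Context {R : realType} {m n : nat}.
Implicit Types (A : 'M[R]_(m, n)).

Lemma enorm_mulmx_frobenius A v :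
  enorm (A *m v) ^+ 2 <= (\sum_i \sum_j A i j ^+ 2) * enorm v ^+ 2.
Proof.
rewrite enorm_sqr /dotv mulr_suml; apply: ler_sum => i _.
pose ri : 'cV[R]_n := (row i A)^T.
have -> : (A *m v) i 0 = dotv ri v.
  by rewrite mxE /dotv; apply: eq_bigr => j _; rewrite !mxE.
have -> : \sum_j A i j ^+ 2 = enorm ri ^+ 2.
  by rewrite enorm_sqr /dotv; apply: eq_bigr => j _; rewrite !mxE expr2.
rewrite -expr2 -exprMn -real_normK ?num_real //.
by rewrite lerXn2r ?nnegrE ?normr_ge0 ?mulr_ge0 ?enorm_ge0 ?normr_dotv_le.
Qed.

Lemma specnorm_has_sup A :
  has_sup [set enorm (A *m v) | v in [set v : 'cV[R]_n | enorm v <= 1]].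
Proof.
split; first by exists (enorm (A *m 0)), 0; rewrite //= enorm0 ler01.
exists (Num.sqrt (\sum_i \sum_j A i j ^+ 2)) => _ [v /= v1 <-].
rewrite -(ger0_norm (enorm_ge0 (A *m v))) -sqrtr_sqr ler_wsqrtr //.
apply: le_trans (enorm_mulmx_frobenius A v) _.
rewrite ler_piMr ?expr_le1 ?enorm_ge0 //.
by apply: sumr_ge0 => i _; apply: sumr_ge0 => j _; apply: sqr_ge0.
Qed.

Lemma enorm_mulmx_le A z : enorm (A *m z) <= specnorm A * enorm z.
Proof.
have [->|z0] := eqVneq z 0; first by rewrite mulmx0 !enorm0 mulr0.
have z_gt0 : 0 < enorm z by rewrite enorm_gt0.
have z1 : [set v | enorm v <= 1] ((enorm z)^-1 *: z) by rewrite /= enorm_normalize.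
have := sup_upper_bound (specnorm_has_sup A) (imageP (fun v => enorm (A *m v)) z1).
by rewrite -scalemxAr enormZ ger0_norm ?invr_ge0 ?enorm_ge0 // mulrC ler_pdivrMr.
Qed.

Lemma sigma_min_le_enorm_trmx A y : sigma_min A * enorm y <= enorm (A^T *m y).
Proof.
have [->|y0] := eqVneq y 0; first by rewrite enorm0 mulr0 enorm_ge0.
have y_gt0 : 0 < enorm y by rewrite enorm_gt0.
have lb : has_lbound [set enorm (A^T *m z) | z in [set z : 'cV[R]_m | enorm z = 1]].
  by exists 0 => _ [z _ <-]; apply: enorm_ge0.
have y1 : [set z | enorm z = 1] ((enorm y)^-1 *: y) by rewrite /= enorm_normalize.
have := ge_inf lb (imageP (fun z => enorm (A^T *m z)) y1).
by rewrite -scalemxAr enormZ ger0_norm ?invr_ge0 ?enorm_ge0 // mulrC ler_pdivlMr.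
Qed.

Lemma specnorm_ge0 A : 0 <= specnorm A.
Proof.
have v0 : [set v | enorm v <= 1] (0 : 'cV[R]_n) by rewrite /= enorm0 ler01.
have := sup_upper_bound (specnorm_has_sup A) (imageP (fun v => enorm (A *m v)) v0).
by rewrite mulmx0 enorm0.
Qed.

Lemma enorm_trmx_mulmx_le A y : enorm (A^T *m y) <= specnorm A * enorm y.
Proof.
have [->|y0] := eqVneq (A^T *m y) 0.
  by rewrite enorm0 mulr_ge0 ?enorm_ge0 ?specnorm_ge0.
have Ay_gt0 : 0 < enorm (A^T *m y) by rewrite enorm_gt0.
rewrite -(ler_pM2r Ay_gt0) -expr2 enorm_sqr dotv_trmx dotvC.
apply: le_trans (cauchy_schwarz _ _) _.
by rewrite [X in _ <= X]mulrAC ler_wpM2r ?enorm_ge0 // enorm_mulmx_le.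
Qed.

End MatrixNorms.

(** * The normal and tangential steps *)

Lemma open_small_shift {R : realType} {n} {X : set 'cV[R]_n} {y} u :
  open X -> X y -> exists2 e : R, 0 < e & forall t, 0 < t < e -> X (y - t *: u).
Proof.
move=> X_open Xy.
have /(nbhs0P X y).1/(near0Z (- u)) := open_nbhs_nbhs (conj X_open Xy).
move=> /(nbhs_ballP _ _).1 [e /= e0 Xe]; exists e => // t /andP[t0 te].
have := Xe t; rewrite -ball_normE /= sub0r normrN gtr0_norm // => /(_ te).
by rewrite scalerN.
Qed.

Section ProxStep.
Context {R : realType} {n : nat} {r : 'cV[R]_n -> R}.

(* Compare the prox step [u] with its shortening [(1 - t) u], and use a
   subgradient at the shortened point to pass from [x + v + u] back to [x]. *)
Lemma prox_subgrad_descent {x v u g w} {alpha t : R} :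
  0 < alpha -> 0 < t <= 1 ->
  dotv g u + (2 * alpha)^-1 * enorm u ^+ 2 + r (x + v + u)
    <= dotv g ((1 - t) *: u) + (2 * alpha)^-1 * enorm ((1 - t) *: u) ^+ 2
       + r (x + v + (1 - t) *: u) ->
  subgrad r (x + v + (1 - t) *: u) w ->
  dotv g u + r (x + v + u) - r x
    <= dotv w v - (2 - t) * (2 * alpha)^-1 * enorm u ^+ 2.
Proof.
move=> alpha0 /andP[t0 t1] u_opt w_sub.
set ia := (2 * alpha)^-1; set nu := enorm u ^+ 2; set yt := x + v + (1 - t) *: u.
have ia0 : 0 < ia by rewrite invr_gt0 mulr_gt0.
rewrite dotvZr enormZ exprMn real_normK ?num_real // -/ia -/nu in u_opt.
have to_x : r yt - dotv w v - (1 - t) * dotv w u <= r x.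
  have := w_sub x; have -> : x - yt = - v - (1 - t) *: u.
    by apply/matrixP => i j; rewrite !mxE; ring.
  by rewrite dotvBr dotvNr dotvZr; lra.
have to_y : r yt + t * dotv w u <= r (x + v + u).
  have := w_sub (x + v + u); have -> : x + v + u - yt = t *: u.
    by apply/matrixP => i j; rewrite !mxE; ring.
  by rewrite dotvZr.
have slope : dotv w u <= - dotv g u - (2 - t) * ia * nu.
  rewrite -(ler_pM2l t0); nra.
have t1' : 0 <= 1 - t by rewrite subr_ge0.
have := ler_wpM2l t1' slope; lra.
Qed.

Lemma D_k_le_normal {m} {X : set 'cV[R]_n} {J : 'M[R]_(m, n)} {x g v u}
    {alpha sb kappa_g kappa_r : R} :
  alg_convex_fun r -> open X -> X (x + (v + u)) ->
  (forall y w, X y -> subgrad r y w -> enorm w <= kappa_r) ->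
  enorm g <= kappa_g -> 0 < alpha -> sb <= 1 -> J *m u = 0 -> dotv v u = 0 ->
  (forall w, J *m w = 0 ->
     dotv g u + (2 * alpha)^-1 * enorm u ^+ 2 + r (x + v + u)
     <= dotv g w + (2 * alpha)^-1 * enorm w ^+ 2 + r (x + v + w)) ->
  D_k (m := m) r sb alpha x g (v + u)
    <= (kappa_g + kappa_r) * enorm v + sb * enorm v ^+ 2 / alpha.
Proof.
move=> r_convex X_open Xy subgrad_bd g_bd alpha0 sb1 Ju vu u_opt.
(* The shortened point [x + v + (1 - t) u] stays in the open set [X] for small [t],
   which is then also chosen so small that the loss [t |u|^2 / (2 alpha)] left
   by [prox_subgrad_descent] is below [eps]. *)
have [e e0 Xe] := open_small_shift u X_open Xy.
set nu := enorm u ^+ 2; set nv := enorm v ^+ 2.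
have nu1 : 0 < nu + 1 by rewrite ltr_pwDr ?sqr_ge0.
apply/ler_addgt0Pr => eps eps0.
set t := Num.min (e / 2) (Num.min 1 (eps * alpha / (nu + 1))).
have t0 : 0 < t by rewrite !lt_min !divr_gt0 ?mulr_gt0 ?ltr01.
have te : t < e by rewrite gt_min ltr_pdivrMr ?ltr_pMr ?ltr1n.
have t1 : t <= 1 by rewrite !ge_min lexx orbT.
have t_nu : t * nu <= eps * alpha.
  have : t <= eps * alpha / (nu + 1) by rewrite !ge_min lexx !orbT.
  rewrite ler_pdivlMr // => /(le_trans _); apply.
  by rewrite ler_pM2l // lerDl ler01.
have shiftE : x + (v + u) - t *: u = x + v + (1 - t) *: u.
  by apply/matrixP => i j; rewrite !mxE; ring.
have Xyt : X (x + v + (1 - t) *: u) by rewrite -shiftE; apply: Xe; rewrite t0 te.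
have [w w_sub] := subgrad_exists r_convex (x + v + (1 - t) *: u).
have t01 : 0 < t <= 1 by rewrite t0 t1.
have J_short : J *m ((1 - t) *: u) = 0 by rewrite -scalemxAr Ju scaler0.
have descent := prox_subgrad_descent alpha0 t01 (u_opt _ J_short) w_sub.
have wv : dotv w v <= kappa_r * enorm v.
  apply: le_trans (cauchy_schwarz w v) _.
  by rewrite ler_wpM2r ?enorm_ge0 // (subgrad_bd _ _ Xyt w_sub).
have gv : dotv g v <= kappa_g * enorm v.
  by apply: le_trans (cauchy_schwarz g v) _; rewrite ler_wpM2r ?enorm_ge0.
have normE : enorm (v + u) ^+ 2 = nv + nu.
  by rewrite /nv /nu !enorm_sqr !(dotvDl, dotvDr) (dotvC u v) vu addr0 add0r.
have iaE : (2 * alpha)^-1 = alpha^-1 / 2 by rewrite invfM mulrC.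
rewrite /D_k normE dotvDr addrA -(addrA x) iaE -/nu in descent *.
have sb_nu : sb * nu / alpha <= nu / alpha.
  by rewrite -mulrA; apply: ler_piMl; rewrite // mulr_ge0 ?invr_ge0 ?sqr_ge0 ?ltW.
have t_nu' : t * nu / alpha <= eps by rewrite ler_pdivrMr.
lra.
Qed.

End ProxStep.

Lemma cauchy_step_decrease {R : realType} {m n} {J : 'M[R]_(m, n)} {c : 'cV[R]_m}
    {kappa beta_max beta_c b : R} :
  specnorm J <= kappa -> 0 <= b <= beta_max -> b * kappa ^+ 2 <= 1 ->
  (forall beta, 0 <= beta <= beta_max ->
     2^-1 * enorm (c - beta *: (J *m J^T *m c)) ^+ 2
     >= 2^-1 * enorm (c - beta_c *: (J *m J^T *m c)) ^+ 2) ->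
  b * enorm (J^T *m c) ^+ 2
    <= 2 * enorm c * (enorm c - enorm (c - beta_c *: (J *m J^T *m c))).
Proof.
move=> J_bd b_range b_small beta_c_min.
set M := J *m J^T *m c; set a := enorm (J^T *m c); set C := enorm c.
set N := enorm (c - beta_c *: M).
have a2 : a ^+ 2 = dotv c M by rewrite enorm_sqr dotv_trmx /M mulmxA.
have M_bd : enorm M <= kappa * a.
  rewrite /M -mulmxA (le_trans (enorm_mulmx_le _ _)) //.
  by rewrite ler_wpM2r ?enorm_ge0.
have b0 : 0 <= b by case/andP: b_range.
have curvature : b ^+ 2 * enorm M ^+ 2 <= b * a ^+ 2.
  have M2 : enorm M ^+ 2 <= (kappa * a) ^+ 2.
    by rewrite lerXn2r ?nnegrE ?enorm_ge0 // (le_trans (enorm_ge0 M)).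
  apply: le_trans (ler_wpM2l (sqr_ge0 b) M2) _.
  rewrite (_ : b ^+ 2 * (kappa * a) ^+ 2 = b * a ^+ 2 * (b * kappa ^+ 2)); last by ring.
  by apply: ler_piMr; rewrite // mulr_ge0 ?sqr_ge0.
have expand : enorm (c - b *: M) ^+ 2 = C ^+ 2 - 2 * b * a ^+ 2 + b ^+ 2 * enorm M ^+ 2.
  rewrite a2 /C !enorm_sqr !(dotvBl, dotvBr, dotvZl, dotvZr) (dotvC M c); ring.
have N_le : N ^+ 2 <= enorm (c - b *: M) ^+ 2.
  by have := beta_c_min b b_range; rewrite ler_pM2l ?invr_gt0 ?ltr0n.
have N0 := enorm_ge0 (c - beta_c *: M); have C0 := enorm_ge0 c.
rewrite -/N -/C in N0 C0 *.
have ba0 : 0 <= b * a ^+ 2 by rewrite mulr_ge0 ?sqr_ge0.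
nra.
Qed.

Definition normal_step {R : realType} {m n} (kappa_v alpha : R) (J : 'M[R]_(m, n))
    (c : 'cV[R]_m) (v : 'cV[R]_n) : Prop :=
  (J^T *m c != 0 ->
     (exists y : 'cV[R]_m, v = J^T *m y) /\
     enorm v <= kappa_v * alpha * enorm (J^T *m c) /\
     (exists beta_c : R,
        0 <= beta_c <= kappa_v * alpha /\
        (forall beta, 0 <= beta <= kappa_v * alpha ->
           2^-1 * enorm (c - beta *: (J *m J^T *m c)) ^+ 2
           >= 2^-1 * enorm (c - beta_c *: (J *m J^T *m c)) ^+ 2) /\
        enorm (c + J *m v) <= enorm (c + J *m (- beta_c *: (J^T *m c))))) /\
  (J^T *m c = 0 -> v = 0 /\ c = 0).

Definition tangential_step {R : realType} {m n} (r : 'cV[R]_n -> R) (alpha : R)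
    (x g : 'cV[R]_n) (J : 'M[R]_(m, n)) (v u : 'cV[R]_n) : Prop :=
  J *m u = 0 /\
  forall w : 'cV[R]_n, J *m w = 0 ->
    dotv g u + (2 * alpha)^-1 * enorm u ^+ 2 + r (x + v + u)
    <= dotv g w + (2 * alpha)^-1 * enorm w ^+ 2 + r (x + v + w).

Lemma normal_step_orthogonal {R : realType} {m n} {kappa_v alpha : R}
    {J : 'M[R]_(m, n)} {c} {v u : 'cV[R]_n} :
  normal_step kappa_v alpha J c v -> J *m u = 0 -> dotv v u = 0.
Proof.
move=> [normal_nz normal_z] Ju.
have [/normal_z[-> _]|/normal_nz[[y ->] _]] := eqVneq (J^T *m c) 0.
  exact: dotv0l.
by rewrite dotv_trmx Ju dotv0r.
Qed.

(** * Lower bound on the penalty parameter *)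

Section TrialPenalty.
Context {R : realType} {n m : nat} {r : 'cV[R]_n -> R} {X : set 'cV[R]_n}.
Context {kappa_v sigma_c sb alpha0 kappa_gf kappa_c kappa_gc kappa_dr : R}.
Context {smin K tau_lo : R}.
Hypotheses (kappa_v_gt0 : 0 < kappa_v) (sigma_c_lt1 : sigma_c < 1) (smin_gt0 : 0 < smin).
Hypotheses (sb_gt0 : 0 < sb) (sb_le1 : sb <= 1).
Hypotheses (kappa_gf_gt0 : 0 < kappa_gf) (kappa_c_gt0 : 0 < kappa_c).
Hypotheses (kappa_gc_gt0 : 0 < kappa_gc) (kappa_dr_gt0 : 0 < kappa_dr).
Hypothesis K_def :
  K = 2 * kappa_v * kappa_gc * (kappa_gf + kappa_dr + sb * kappa_c * kappa_v * kappa_gc).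
Hypotheses (r_convex : alg_convex_fun r) (X_open : open X)
  (subgrad_bd : forall y w, X y -> subgrad r y w -> enorm w <= kappa_dr).
Hypotheses (tau_lo_ge0 : 0 <= tau_lo)
  (tau_lo_le1 : tau_lo * K <= (1 - sigma_c) * kappa_v * smin ^+ 2)
  (tau_lo_le2 : tau_lo * (K * alpha0) <= (1 - sigma_c) * (smin / kappa_gc) ^+ 2).

Lemma K_gt0 : 0 < K.
Proof. by rewrite K_def !mulr_gt0 // addr_gt0 // ?addr_gt0 // !mulr_gt0. Qed.

(* [b = min (kappa_v alpha) kappa_gc^-2] is the step length fed to
   [cauchy_step_decrease]: it is admissible and satisfies [b kappa_gc^2 <= 1]. *)
Lemma tau_lo_le_step_ratio {alpha} : 0 < alpha <= alpha0 -> 0 <= smin <= kappa_gc ->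
  tau_lo * (alpha * K)
    <= (1 - sigma_c) * Num.min (kappa_v * alpha) (kappa_gc ^+ 2)^-1 * smin * kappa_gc.
Proof.
move=> /andP[alpha_gt0 alpha_le] /andP[smin_ge0 smin_le].
have sc0 : 0 <= 1 - sigma_c by rewrite subr_ge0 ltW.
have smin2 : smin ^+ 2 <= smin * kappa_gc by rewrite expr2 ler_wpM2l.
have [beta_le|beta_gt] := leP (kappa_v * alpha) (kappa_gc ^+ 2)^-1.
- have := ler_wpM2l (ltW alpha_gt0) tau_lo_le1.
  have := ler_wpM2l (mulr_ge0 (mulr_ge0 (ltW alpha_gt0) sc0) (ltW kappa_v_gt0)) smin2.
  lra.
- set ig := (kappa_gc ^+ 2)^-1.
  have ig0 : 0 <= ig by rewrite invr_ge0 sqr_ge0.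
  have := tau_lo_le2; rewrite expr_div_n -/ig.
  have := ler_wpM2l (mulr_ge0 tau_lo_ge0 (ltW K_gt0)) alpha_le.
  have := ler_wpM2l (mulr_ge0 ig0 sc0) smin2.
  lra.
Qed.

Lemma D_k_scaled_le {D nv a alpha} : 0 < alpha -> 0 <= nv ->
  D <= (kappa_gf + kappa_dr) * nv + sb * nv ^+ 2 / alpha ->
  nv <= kappa_v * alpha * a -> a <= kappa_gc * kappa_c ->
  2 * kappa_gc * D <= alpha * K * a.
Proof.
move=> alpha_gt0 nv0 D_le nv_le a_le.
have a0 : 0 <= a by rewrite -(pmulr_rge0 _ (mulr_gt0 kappa_v_gt0 alpha_gt0)) (le_trans nv0).
have nv2 : sb * nv ^+ 2 / alpha <= sb * kappa_v ^+ 2 * alpha * a * a.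
  rewrite ler_pdivrMr // (_ : _ * a * a * alpha = sb * (kappa_v * alpha * a) ^+ 2).
    apply: ler_wpM2l; first exact: ltW.
    by rewrite lerXn2r ?nnegrE // (le_trans nv0).
  by ring.
have w0 : 0 <= sb * kappa_v ^+ 2 * alpha * a.
  by rewrite (mulr_ge0 _ a0) // (mulr_ge0 _ (ltW alpha_gt0)) // mulr_ge0 ?sqr_ge0 ?ltW.
have nv1 := ler_wpM2l (addr_ge0 (ltW kappa_gf_gt0) (ltW kappa_dr_gt0)) nv_le.
have a2 := ler_wpM2l w0 a_le.
have : D <= kappa_v * alpha * a * (kappa_gf + kappa_dr + sb * kappa_c * kappa_v * kappa_gc).
  by lra.
have two_kgc : 0 <= 2 * kappa_gc by rewrite mulr_ge0 ?ltW.
by move=> /(ler_wpM2l two_kgc); rewrite K_def; lra.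
Qed.

Lemma tau_lo_mul_D_le {D a C N b alpha} : 0 < a -> 0 < C -> 0 <= b ->
  2 * kappa_gc * D <= alpha * K * a ->
  tau_lo * (alpha * K) <= (1 - sigma_c) * b * smin * kappa_gc ->
  smin * C <= a -> b * a ^+ 2 <= 2 * C * (C - N) ->
  tau_lo * D <= (1 - sigma_c) * (C - N).
Proof.
move=> a_gt0 C_gt0 b0 D_le ratio smin_a decrease.
have two_kgc_C : 0 < 2 * kappa_gc * C by rewrite !mulr_gt0.
rewrite -(ler_pM2l two_kgc_C).
have sck0 : 0 <= (1 - sigma_c) * kappa_gc by rewrite mulr_ge0 ?subr_ge0 ?ltW.
have := ler_wpM2l (mulr_ge0 (ltW C_gt0) tau_lo_ge0) D_le.
have := ler_wpM2l (mulr_ge0 (ltW C_gt0) (ltW a_gt0)) ratio.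
have := ler_wpM2l (mulr_ge0 (mulr_ge0 sck0 b0) (ltW a_gt0)) smin_a.
have := ler_wpM2l sck0 decrease.
lra.
Qed.

Lemma tau_lo_le_tau_trial {x g} {c : 'cV[R]_m} {J : 'M[R]_(m, n)} {v u alpha} :
  X (x + (v + u)) -> enorm g <= kappa_gf -> enorm c <= kappa_c ->
  specnorm J <= kappa_gc -> smin <= sigma_min J -> 0 < alpha <= alpha0 ->
  normal_step kappa_v alpha J c v -> tangential_step r alpha x g J v u ->
  (tau_lo%:E <= tau_trial_of r sigma_c sb alpha x g v (v + u) c J)%E.
Proof.
move=> Xy g_bd c_bd J_bd smin_le alpha_range normal [Ju u_opt].
have /andP[alpha_gt0 _] := alpha_range.
rewrite /tau_trial_of; case: ifP => [_|/negbT]; first by rewrite leey.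
rewrite -ltNge; set D := D_k _ _ _ _ _ _ => D_gt0.
have D_le := D_k_le_normal r_convex X_open Xy subgrad_bd g_bd alpha_gt0 sb_le1 Ju
  (normal_step_orthogonal normal Ju) u_opt; rewrite -/D in D_le.
have [/normal.2[v0 _]|Jc_nz] := eqVneq (J^T *m c) 0.
  by move: D_le; rewrite v0 enorm0 expr0n /= !mulr0 !mul0r addr0 leNgt D_gt0.
have [_ [v_bd [beta_c [beta_range [beta_min cv_le]]]]] := normal.1 Jc_nz.
set a := enorm (J^T *m c) in v_bd beta_min; set C := enorm c.
have a_gt0 : 0 < a by rewrite enorm_gt0.
have a_le : a <= kappa_gc * C.
  by rewrite (le_trans (enorm_trmx_mulmx_le _ _)) ?ler_wpM2r ?enorm_ge0.
have smin_a : smin * C <= a.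
  by rewrite (le_trans _ (sigma_min_le_enorm_trmx _ _)) ?ler_wpM2r ?enorm_ge0.
have C_gt0 : 0 < C by rewrite -(pmulr_rgt0 _ kappa_gc_gt0) (lt_le_trans a_gt0 a_le).
have smin_range : 0 <= smin <= kappa_gc.
  by rewrite ltW //= -(ler_pM2r C_gt0) (le_trans smin_a a_le).
set b := Num.min (kappa_v * alpha) (kappa_gc ^+ 2)^-1.
have b_range : 0 <= b <= kappa_v * alpha.
  have kva : 0 <= kappa_v * alpha by rewrite mulr_ge0 ?ltW.
  by rewrite /b le_min ge_min lexx kva invr_ge0 sqr_ge0.
have b_small : b * kappa_gc ^+ 2 <= 1.
  by rewrite -ler_pdivlMr ?exprn_gt0 // mul1r /b ge_min lexx orbT.
have decrease := cauchy_step_decrease J_bd b_range b_small beta_min.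
have ratio := tau_lo_le_step_ratio alpha_range smin_range.
rewrite -/a -/b in decrease ratio; rewrite -scalemxAr mulmxA scaleNr in cv_le.
have a_le' : a <= kappa_gc * kappa_c by apply: le_trans a_le (ler_wpM2l (ltW _) c_bd).
have D_le' := D_k_scaled_le alpha_gt0 (enorm_ge0 v) D_le v_bd a_le'.
rewrite lee_fin ler_pdivlMr //.
have b0 : 0 <= b by case/andP: b_range.
apply: le_trans (tau_lo_mul_D_le a_gt0 C_gt0 b0 D_le' ratio smin_a decrease) _.
by apply: ler_wpM2l; [rewrite subr_ge0 ltW | rewrite lerD2l lerN2].
Qed.

End TrialPenalty.

Lemma tau_update_ge {R : realType} {eps tau_prev tau_lo tau_min : R} {ttrial} :
  0 <= eps <= 1 -> 0 <= tau_lo -> tau_min <= tau_prev ->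
  tau_min <= (1 - eps) * tau_lo -> (tau_lo%:E <= ttrial)%E ->
  tau_min <= tau_update eps tau_prev ttrial.
Proof.
move=> /andP[eps0 eps1] lo0 prev_ge lo_ge; rewrite /tau_update.
case: ifP => // /negbT; case: ttrial => [t||]; rewrite ?leey ?leNye //.
rewrite !lee_fin -ltNge /= => t_lt lo_t.
have eps_lo : 0 <= eps * tau_lo by rewrite mulr_ge0.
have one_eps : 0 <= 1 - eps by rewrite subr_ge0.
have := ler_wpM2l one_eps (ltW (le_lt_trans lo_t t_lt)).
by rewrite le_min => ?; apply/andP; split; lra.
Qed.

Section Run.
Context {R : realType} {n m : nat}.
Context {f r : 'cV[R]_n -> R} {g : 'cV[R]_n -> 'cV[R]_n}.
Context {c : 'cV[R]_n -> 'cV[R]_m} {J : 'cV[R]_n -> 'M[R]_(m, n)}.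
Context {kappa_v sigma_c eps_tau xi eta sigma_u tau_m1 : R}.
Context {x : nat -> 'cV[R]_n} {alpha tau : nat -> R} {v u : nat -> 'cV[R]_n}.
Hypothesis run : algorithm_run f r g c J kappa_v sigma_c eps_tau xi eta sigma_u tau_m1
  x alpha tau v u.

Lemma run_normal_step k : normal_step kappa_v (alpha k) (J (x k)) (c (x k)) (v k).
Proof. by have [step1 [step1' _]] := run k; split. Qed.

Lemma run_tangential_step k :
  tangential_step r (alpha k) (x k) (g (x k)) (J (x k)) (v k) (u k).
Proof. by have [_ [_ [step2 _]]] := run k. Qed.

Lemma run_alpha_bounds : 0 < xi < 1 -> 0 < alpha 0%N ->
  forall k, 0 < alpha k <= alpha 0%N.
Proof.
move=> /andP[xi_gt0 xi_lt1] alpha0_gt0; elim=> [|k /andP[alpha_gt0 alpha_le]].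
  by rewrite alpha0_gt0 lexx.
have [_ [_ [_ [_ [_ step4]]]]] := run k; move: step4; case: ifP => _ [_ ->].
  by rewrite alpha_gt0.
by rewrite mulr_gt0 //= (le_trans _ alpha_le) // ler_piMl ?ltW.
Qed.

Lemma run_tau_ge {tau_lo tau_min} : 0 <= eps_tau <= 1 -> 0 <= tau_lo ->
  (forall k, (tau_lo%:E <= tau_trial_of r sigma_c (sigma_u + 2^-1) (alpha k) (x k)
                             (g (x k)) (v k) (v k + u k) (c (x k)) (J (x k)))%E) ->
  tau_min <= tau 0%N -> tau_min <= (1 - eps_tau) * tau_lo ->
  forall k, tau_min <= tau k.
Proof.
move=> eps_range lo0 trial_ge tau0_ge lo_ge; elim=> // k IHk.
case: (run k.+1) => _ [_ [_ [_ [-> _]]]].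
exact: tau_update_ge eps_range lo0 IHk lo_ge (trial_ge k.+1).
Qed.

End Run.

Lemma min_div_bounds {R : realFieldType} (A B P Q : R) :
  0 < A -> 0 < B -> 0 < P -> 0 < Q ->
  [/\ 0 < Num.min (A / P) (B / Q), Num.min (A / P) (B / Q) * P <= A
     & Num.min (A / P) (B / Q) * Q <= B].
Proof.
move=> A0 B0 P0 Q0; split; first by rewrite lt_min !divr_gt0.
  by rewrite -ler_pdivlMr // ge_min lexx.
by rewrite -ler_pdivlMr // ge_min lexx orbT.
Qed.

Theorem lemma3p13 (R : realType) (n m : nat) (Hmn : (m <= n)%N)
  (f r : 'cV[R]_n -> R) (g : 'cV[R]_n -> 'cV[R]_n)
  (c : 'cV[R]_n -> 'cV[R]_m) (J : 'cV[R]_n -> 'M[R]_(m, n))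
  (* f, c continuously differentiable with gradient g and Jacobian J *)
  (Hf : forall x, differentiable f x /\ 'd f x = (fun h => dotv (g x) h) :> (_ -> _))
  (Hg : continuous g)
  (Hc : forall x, differentiable c x /\ 'd c x = (fun h => J x *m h) :> (_ -> _))
  (HJ : continuous J)
  (* r convex, nonnegative *)
  (Hr0 : forall x, 0 <= r x) (Hrconv : alg_convex_fun r)
  (* algorithm constants *)
  (kappa_v sigma_c eps_tau xi eta sigma_u alpha0 tau_m1 : R)
  (Hkv : 0 < kappa_v) (Hsc : 0 < sigma_c < 1) (Het : 0 < eps_tau < 1)
  (Hxi : 0 < xi < 1) (Heta : 0 < eta < 1) (Hsu : 0 < sigma_u <= 2^-1)
  (Ha0 : 0 < alpha0) (Htm1 : 0 < tau_m1)
  (* the iterates of a non-terminating run *)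
  (x : nat -> 'cV[R]_n) (alpha tau : nat -> R) (v u : nat -> 'cV[R]_n)
  (Halpha0 : alpha 0%N = alpha0)
  (Hrun : algorithm_run f r g c J kappa_v sigma_c eps_tau xi eta sigma_u tau_m1
            x alpha tau v u)
  (* standing assumption *)
  (X : set 'cV[R]_n) (kappa_gf kappa_c kappa_gc kappa_dr : R)
  (Hkgf : 0 < kappa_gf) (Hkc : 0 < kappa_c) (Hkgc : 0 < kappa_gc) (Hkdr : 0 < kappa_dr)
  (HXopen : open X) (HXconv : alg_convex_set X)
  (HXit : forall k, X (x k) /\ X (x k + (v k + u k)))
  (Hfbd : exists flow : R, forall y, X y -> flow <= f y)
  (Hgbd : forall y, X y -> enorm (g y) <= kappa_gf)
  (Hcbd : forall y, X y -> enorm (c y) <= kappa_c)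
  (HJbd : forall y, X y -> specnorm (J y) <= kappa_gc)
  (Hdrbd : forall y w, X y -> subgrad r y w -> enorm w <= kappa_dr)
  (HgLip : alg_lipschitz_on X g enorm)
  (HJLip : alg_lipschitz_on X J specnorm)
  (* uniform lower bound on the smallest singular value of J_k *)
  (smin : R) (Hsmin : 0 < smin) (Hsig : forall k, smin <= sigma_min (J (x k))) :
  let sigma_u_bar := sigma_u + 2^-1 in
  let K := 2 * kappa_v * kappa_gc *
           (kappa_gf + kappa_dr + sigma_u_bar * kappa_c * kappa_v * kappa_gc) in
  let tau_min_trial := Num.min ((1 - sigma_c) * kappa_v * smin ^+ 2 / K)
                               ((1 - sigma_c) * (smin / kappa_gc) ^+ 2 / (K * alpha0)) in
  let tau_min := Num.min (tau 0%N) ((1 - eps_tau) * tau_min_trial) in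
  (forall k, (tau_min_trial%:E <=
     tau_trial_of r sigma_c sigma_u_bar (alpha k) (x k) (g (x k)) (v k)
       (v k + u k) (c (x k)) (J (x k)))%E) /\
  (forall k, tau_min <= tau k).
Proof.
move=> sb K tau_lo tau_min.
have [sigma_u_gt0 sigma_u_le] := andP Hsu.
have [sigma_c_gt0 sigma_c_lt1] := andP Hsc.
have sb_gt0 : 0 < sb by rewrite /sb; lra.
have sb_le1 : sb <= 1 by rewrite /sb; lra.
have K_gt0 : 0 < K by rewrite /K !mulr_gt0 // addr_gt0 // ?addr_gt0 // !mulr_gt0.
have [tau_lo_gt0 tau_lo_le1 tau_lo_le2] : [/\ 0 < tau_lo,
    tau_lo * K <= (1 - sigma_c) * kappa_v * smin ^+ 2
  & tau_lo * (K * alpha0) <= (1 - sigma_c) * (smin / kappa_gc) ^+ 2].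
  have sc0 : 0 < 1 - sigma_c by rewrite subr_gt0.
  apply: min_div_bounds K_gt0 (mulr_gt0 K_gt0 Ha0).
    by rewrite !mulr_gt0 // exprn_gt0.
  by rewrite mulr_gt0 // exprn_gt0 // divr_gt0.
have alpha_bd k : 0 < alpha k <= alpha0.
  by rewrite -Halpha0 (run_alpha_bounds Hrun Hxi) ?Halpha0.
have trial_ge k : (tau_lo%:E <= tau_trial_of r sigma_c sb (alpha k) (x k) (g (x k))
                    (v k) (v k + u k) (c (x k)) (J (x k)))%E.
  have [Xx Xy] := HXit k.
  exact: (tau_lo_le_tau_trial Hkv sigma_c_lt1 Hsmin sb_gt0 sb_le1 Hkgf Hkc Hkgc Hkdr
    erefl Hrconv HXopen Hdrbd (ltW tau_lo_gt0) tau_lo_le1 tau_lo_le2 Xy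
    (Hgbd _ Xx) (Hcbd _ Xx) (HJbd _ Xx) (Hsig k) (alpha_bd k)
    (run_normal_step Hrun k) (run_tangential_step Hrun k)).
split=> //.
have eps_range : 0 <= eps_tau <= 1 by case/andP: Het => /ltW -> /ltW.
by apply: (run_tau_ge Hrun eps_range (ltW tau_lo_gt0) trial_ge); rewrite ge_min lexx ?orbT.
Qed.
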